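(* Let $H=(V,E)$ be a finite graph, $p\in(0,1)$, $q>1$, and let $P_{CM}$ be the transition matrix of the CM dynamics on $H$. With $M$, $M^*$ and $T_e$ ($e\in E$) as defined in the context, $$P_{CM}=M\Big(\prod_{e\in E}T_e\Big)M^*.$$
   Context: Configurations are $A\subseteq E$; $c(A)$ is the number of connected components of $(V,A)$. CM dynamics on $H$: from $A$, (i) activate each connected component of $(V,A)$ independently with probability $1/q$; (ii) remove all edges joining two active vertices; (iii) add each edge joining two active vertices independently with probability $p$. Let $\Omega_E=\{A\subseteq E\}$, $\Omega_V=\{0,1\}^V$ (1 = active, 0 = inactive), $\Omega_J=\Omega_V\times\Omega_E$. For $\sigma\in\Omega_V$, $E(\sigma)=\{(u,v)\in E:\sigma(u)=\sigma(v)\}$, and $f(\sigma,A)$ is the number of connected components of $(V,A)$ whose vertices are inactive. Define $M(B,(\sigma,A))=\mathbf 1(A=B)\mathbf 1(A\subseteq E(\sigma))(q-1)^{f(\sigma,A)}q^{-c(A)}$, $M^*((\sigma,A),B)=\mathbf 1(A=B)$, and for $e=(u,v)\in E$, $T_e((\sigma,A),(\tau,B))=\mathbf 1(\sigma=\tau)\cdot t$ where $t=p$ if $B=A\cup\{e\}$ and $\sigma(u)=\sigma(v)=1$; $t=1-p$ if $B=A\setminus\{e\}$ and $\sigma(u)=\sigma(v)=1$; and, if $\sigma(u)=0$ or $\sigma(v)=0$, $t=1$ if $B=A$ and $t=0$ otherwise (and $t=0$ in all other cases, i.e. $T_e$ only changes edge $e$). The $T_e$ commute, so the product order is irrelevant.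 *)

From HB Require Import structures.
From mathcomp Require Import all_boot all_order all_algebra.
Set Implicit Arguments. Unset Strict Implicit. Unset Printing Implicit Defensive.
Import Order.TTheory GRing.Theory Num.Theory.
Local Open Scope ring_scope.

(* A finite graph H = (V, E): vertex type V, edge type Ed (= E), and
   ends e = (u, v) the endpoints of edge e. *)

Definition kernel (R : Type) (X Y : Type) := X -> Y -> R.

Definition kcomp (R : pzRingType) (X Y Z : finType)
  (K1 : kernel R X Y) (K2 : kernel R Y Z) : kernel R X Z :=
  fun x z => \sum_(y : Y) K1 x y * K2 y z.

Definition kid (R : pzRingType) (X : finType) : kernel R X X :=
  fun x y => (x == y)%:R.

(* Omega_V = {0,1}^V (true = active), Omega_E = subsets of E,
   Omega_J = Omega_V * Omega_E. *)
Definition OmegaJ (V Ed : finType) := ({ffun V -> bool} * {set Ed})%type.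

Definition adj (V Ed : finType) (ends : Ed -> V * V) (A : {set Ed}) : rel V :=
  fun u v => [exists e in A, (ends e == (u, v)) || (ends e == (v, u))].

Definition ncomp (V Ed : finType) (ends : Ed -> V * V) (A : {set Ed}) : nat :=
  n_comp (adj ends A) predT.

(* f(sigma, A): number of components of (V, A) all of whose vertices are inactive
   (each component counted through its representative root) *)
Definition ninact (V Ed : finType) (ends : Ed -> V * V)
  (s : {ffun V -> bool}) (A : {set Ed}) : nat :=
  #|[set r : V | (fingraph.root (adj ends A) r == r) &&
                 [forall v, connect (adj ends A) r v ==> ~~ s v]]|.

Definition nact (V Ed : finType) (ends : Ed -> V * V)
  (s : {ffun V -> bool}) (A : {set Ed}) : nat :=
  #|[set r : V | (fingraph.root (adj ends A) r == r) &&
                 [forall v, connect (adj ends A) r v ==> s v]]|.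

Definition Esame (V Ed : finType) (ends : Ed -> V * V) (s : {ffun V -> bool})
  : {set Ed} := [set e | s (ends e).1 == s (ends e).2].

Definition Eact (V Ed : finType) (ends : Ed -> V * V) (s : {ffun V -> bool})
  : {set Ed} := [set e | s (ends e).1 && s (ends e).2].

(* sigma is constant on every connected component of (V, A), i.e. sigma arises
   from an activation of the components of (V, A) *)
Definition compatible (V Ed : finType) (ends : Ed -> V * V)
  (s : {ffun V -> bool}) (A : {set Ed}) : bool :=
  [forall u, forall v, connect (adj ends A) u v ==> (s u == s v)].

(* Transition matrix of the CM dynamics:
   (i) choose the activation sigma (each component active w.p. 1/q),
   (ii)+(iii) edges not joining two active vertices are kept as in A;
   each edge joining two active vertices is present in B independently w.p. p. *)
Definition P_CM (R : realFieldType) (V Ed : finType) (ends : Ed -> V * V)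
  (p q : R) : kernel R {set Ed} {set Ed} :=
  fun A B =>
    \sum_(s : {ffun V -> bool} | compatible ends s A)
      ((q^-1) ^+ nact ends s A * (1 - q^-1) ^+ ninact ends s A *
       ((B :\: Eact ends s == A :\: Eact ends s)%:R *
        p ^+ #|B :&: Eact ends s| * (1 - p) ^+ #|Eact ends s :\: B|)).

Definition Mker (R : realFieldType) (V Ed : finType) (ends : Ed -> V * V)
  (q : R) : kernel R {set Ed} (OmegaJ V Ed) :=
  fun B x =>
    ((x.2 == B) && (x.2 \subset Esame ends x.1))%:R *
    (q - 1) ^+ ninact ends x.1 x.2 * (q ^+ ncomp ends x.2)^-1.

Definition Mstar (R : realFieldType) (V Ed : finType)
  : kernel R (OmegaJ V Ed) {set Ed} :=
  fun x B => (x.2 == B)%:R.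

Definition Te (R : realFieldType) (V Ed : finType) (ends : Ed -> V * V)
  (p : R) (e : Ed) : kernel R (OmegaJ V Ed) (OmegaJ V Ed) :=
  fun x y =>
    if x.1 == y.1 then
      if x.1 (ends e).1 && x.1 (ends e).2 then
        (if y.2 == x.2 :|: [set e] then p
         else if y.2 == x.2 :\ e then 1 - p else 0)
      else (y.2 == x.2)%:R
    else 0.

(* prod_{e in E} T_e (the T_e commute; we multiply in the enumeration order) *)
Definition Tprod (R : realFieldType) (V Ed : finType) (ends : Ed -> V * V)
  (p : R) : kernel R (OmegaJ V Ed) (OmegaJ V Ed) :=
  foldr (fun e K => kcomp (Te ends p e) K) (@kid R (OmegaJ V Ed)) (enum Ed).

From HB Require Import structures.
From mathcomp Require Import all_boot all_order all_algebra.
From mathcomp Require Import ring.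
Import Order.TTheory GRing.Theory Num.Theory.
Local Open Scope ring_scope.

(* Both sides are computed in closed form.  On the right, M* forgets sigma and
   T_e never changes sigma, so only the diagonal terms sigma = tau survive;
   composing the T_e one edge at a time resamples each active edge
   independently (present with probability p) and keeps every other edge, which
   is exactly steps (ii)-(iii).  To the left of T, the weight
   (q-1)^f q^(-c) of M equals (1/q)^(#active components) (1-1/q)^f, the
   probability of the activation sigma, because c = f + #active components
   once sigma is constant on components, i.e. once A is a subset of E(sigma). *)

Section PairSums.

Context {R : nmodType} {X Y : finType}.

Lemma sum_pair (F : X * Y -> R) : \sum_x F x = \sum_i \sum_j F (i, j).
Proof. by rewrite pair_big; apply: eq_bigr => -[]. Qed.

Lemma sum_pair_fst (F : X * Y -> R) a :
  (forall x, x.1 != a -> F x = 0) -> \sum_x F x = \sum_y F (a, y).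
Proof.
move=> F0; rewrite sum_pair (bigD1 a) //= [X in _ + X]big1 ?addr0 //.
by move=> i ia; apply: big1 => j _; apply: F0.
Qed.

Lemma sum_pair_snd (F : X * Y -> R) b :
  (forall x, x.2 != b -> F x = 0) -> \sum_x F x = \sum_x F (x, b).
Proof.
move=> F0; rewrite sum_pair; apply: eq_bigr => i _.
by rewrite (bigD1 b) //= big1 ?addr0 // => j jb; apply: F0.
Qed.

End PairSums.

Lemma prodr_nat_forall {R : comPzSemiRingType} {T : finType} (Q P : pred T) :
  \prod_(x | Q x) ((P x)%:R : R) = [forall x, Q x ==> P x]%:R.
Proof.
case: (boolP [forall x, _]) => [/forallP QP | /forallPn [x]]; last first.
  by rewrite negb_imply => /andP [Qx /negbTE Px]; rewrite (bigD1 x) //= Px mul0r.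
by apply: big1 => x Qx; have := QP x; rewrite Qx => /= ->.
Qed.

Section Resampling.

Context {R : realFieldType} {Ed : finType} (p : R).

Definition resample_factor (S A B : {set Ed}) (x : Ed) : R :=
  if x \in S then (if x \in B then p else 1 - p)
  else ((x \in B) == (x \in A))%:R.

Lemma prod_resample_factor S A B :
  \prod_x resample_factor S A B x =
  (B :\: S == A :\: S)%:R * p ^+ #|B :&: S| * (1 - p) ^+ #|S :\: B|.
Proof.
rewrite (bigID (mem S)) /= mulrC.
rewrite (eq_bigr (fun x => ((x \in B) == (x \in A))%:R)); last first.
  by move=> x /negbTE; rewrite /resample_factor => ->.
rewrite prodr_nat_forall -mulrA; congr ((_ : bool)%:R * _).
  apply/forallP/eqP => [kept | /setP eqBA x].
    by apply/setP => x; rewrite !inE; have := kept x; case: (x \in S) => //= /eqP ->.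
  by have := eqBA x; rewrite !inE; case: (x \in S) => //= ->.
rewrite (bigID (mem B)) /= -!prodr_const; congr (_ * _).
- apply: eq_big => [x | x /andP [xS xB]]; first by rewrite !inE andbC.
  by rewrite /resample_factor xS xB.
- apply: eq_big => [x | x /andP [xS /negbTE xB]]; first by rewrite !inE andbC.
  by rewrite /resample_factor xS xB.
Qed.

Lemma prod_resample_factor_setU1 (S A B : {set Ed}) e : e \notin S ->
  \prod_x resample_factor (e |: S) A B x =
  p * \prod_x resample_factor S (A :|: [set e]) B x +
  (1 - p) * \prod_x resample_factor S (A :\ e) B x.
Proof.
move=> eNS; rewrite (bigD1 e) // [X in p * X](bigD1 e) // [X in (1 - p) * X](bigD1 e) //=.
set P := \prod_(x | x != e) resample_factor (e |: S) A B x.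
have -> : \prod_(x | x != e) resample_factor S (A :|: [set e]) B x = P.
  by apply: eq_bigr => x xe; rewrite /resample_factor !inE (negbTE xe) orbF.
have -> : \prod_(x | x != e) resample_factor S (A :\ e) B x = P.
  by apply: eq_bigr => x xe; rewrite /resample_factor !inE (negbTE xe).
rewrite /resample_factor (negbTE eNS) !inE eqxx /= orbT.
by case: (e \in B); rewrite /= ?mul1r ?mul0r; ring.
Qed.

End Resampling.

Section CMKernels.

Context {R : realFieldType} {V Ed : finType} (ends : Ed -> V * V).

Lemma kcomp_Te (p : R) e (K : kernel R (OmegaJ V Ed) (OmegaJ V Ed)) sg A y :
  kcomp (Te ends p e) K (sg, A) y =
  if sg (ends e).1 && sg (ends e).2
  then p * K (sg, A :|: [set e]) y + (1 - p) * K (sg, A :\ e) y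
  else K (sg, A) y.
Proof.
rewrite /kcomp (sum_pair_fst _ sg) => [|[tau C] /= tau_sg]; last first.
  by rewrite /Te /= eq_sym (negbTE tau_sg) mul0r.
rewrite /Te /= eqxx; case: ifP => _; last first.
  by rewrite (bigD1 A) //= eqxx mul1r big1 ?addr0 // => C /negbTE ->; rewrite mul0r.
have e_setU1 : e \in A :|: [set e] by rewrite !inE eqxx orbT.
have AeD1 : A :\ e != A :|: [set e].
  by apply: contraTneq e_setU1 => <-; rewrite !inE eqxx.
rewrite (bigD1 (A :|: [set e])) // (bigD1 (A :\ e)) //= eqxx (negbTE AeD1) eqxx.
by rewrite big1 ?addr0 // => C /andP [/negbTE -> /negbTE ->]; rewrite mul0r.
Qed.

Lemma foldr_Te (p : R) s : uniq s -> forall sg A tau B,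
  foldr (fun e K => kcomp (Te ends p e) K) (@kid R (OmegaJ V Ed)) s (sg, A) (tau, B)
  = (sg == tau)%:R *
    \prod_x resample_factor p (Eact ends sg :&: [set x in s]) A B x.
Proof.
elim: s => [_ | e s IH /= /andP [eNs uniq_s]] sg A tau B.
  rewrite /= /kid xpair_eqE setI0 prod_resample_factor setI0 set0D !setD0.
  by rewrite cards0 !expr0 !mulr1 [B == A]eq_sym -natrM mulnb.
have grow : Eact ends sg :&: [set x in e :: s] =
    (if sg (ends e).1 && sg (ends e).2 then e |: (Eact ends sg :&: [set x in s])
     else Eact ends sg :&: [set x in s]).
  apply/setP => x; case: ifP => active; case: (eqVneq x e) => [-> | xe];
  by rewrite !inE ?active ?eqxx ?(negbTE xe).
rewrite kcomp_Te !IH // grow; case: ifP => // _.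
rewrite prod_resample_factor_setU1; first by ring.
by rewrite !inE (negbTE eNs) andbF.
Qed.

Lemma Tprod_E (p : R) sg A tau B :
  Tprod ends p (sg, A) (tau, B) =
  (sg == tau)%:R * ((B :\: Eact ends sg == A :\: Eact ends sg)%:R *
     p ^+ #|B :&: Eact ends sg| * (1 - p) ^+ #|Eact ends sg :\: B|).
Proof.
rewrite /Tprod foldr_Te ?enum_uniq // -prod_resample_factor.
by congr (_ * _); apply: eq_bigr => x _; rewrite /resample_factor !inE mem_enum andbT.
Qed.

Lemma compatible_subset_Esame sg A :
  compatible ends sg A = (A \subset Esame ends sg).
Proof.
have adj_same u v : {subset A <= Esame ends sg} -> adj ends A u v -> sg u = sg v.
  move=> AE /existsP [e /andP [/AE]]; rewrite inE => /eqP same.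
  by case/orP => /eqP ends_e; rewrite ends_e /= in same; rewrite same.
apply/forallP/subsetP => [comp e eA | AE u].
  have /forallP/(_ (ends e).2)/implyP := comp (ends e).1; rewrite inE; apply.
  by apply: connect1; apply/existsP; exists e; rewrite eA -surjective_pairing eqxx.
apply/forallP => v; apply/implyP => /connectP [pth].
elim: pth u => [|w pth IH] u /=; first by move=> _ ->.
by case/andP => uw /IH wv /wv; rewrite (adj_same u w AE uw).
Qed.

Lemma nact_add_ninact sg A : compatible ends sg A ->
  (nact ends sg A + ninact ends sg A)%N = ncomp ends A.
Proof.
move=> /forallP comp.
have component_value (f : bool -> bool) r :
    [forall v, connect (adj ends A) r v ==> f (sg v)] = f (sg r).
  apply/forallP/idP => [/(_ r) | fsr v]; first by rewrite connect0.
  by apply/implyP => rv; have /forallP/(_ v)/implyP/(_ rv)/eqP <- := comp r.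
pose roots := [set r | fingraph.root (adj ends A) r == r].
have -> : nact ends sg A = #|roots :&: [set r | sg r]|.
  by apply: eq_card => r; rewrite !inE (component_value id r).
have -> : ninact ends sg A = #|roots :\: [set r | sg r]|.
  by apply: eq_card => r; rewrite !inE (component_value negb r) andbC.
by rewrite cardsID; apply: eq_card => r; rewrite !inE andbT.
Qed.

Lemma Mker_E (q : R) sg A : q != 0 ->
  Mker ends q A (sg, A) =
  (compatible ends sg A)%:R *
  ((q^-1) ^+ nact ends sg A * (1 - q^-1) ^+ ninact ends sg A).
Proof.
move=> q0; rewrite /Mker /= eqxx -compatible_subset_Esame /=.
have [comp | _] := boolP (compatible ends sg A); last by rewrite !mul0r.
have -> : 1 - q^-1 = (q - 1) * q^-1 by field.
by rewrite -(nact_add_ninact _ _ comp) exprMn exprD invfM !exprVn; ring.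
Qed.

End CMKernels.

Theorem mainTheorem5 (R : realFieldType) (V Ed : finType) (ends : Ed -> V * V)
  (p q : R) (hp0 : 0 < p) (hp1 : p < 1) (hq : 1 < q) :
  forall A B : {set Ed},
    P_CM ends p q A B =
    kcomp (kcomp (Mker ends q) (Tprod ends p)) (@Mstar R V Ed) A B.
Proof.
move=> A B; have q0 : q != 0 by rewrite gt_eqF // (lt_trans ltr01 hq).
rewrite /kcomp (sum_pair_snd _ B) => [|y /negbTE yB]; last by rewrite /Mstar yB mulr0.
under eq_bigr do rewrite /Mstar eqxx mulr1.
rewrite exchange_big (sum_pair_snd _ A) => [|x /negbTE xA]; last first.
  by apply: big1 => y _; rewrite /Mker xA !mul0r.
rewrite /P_CM big_mkcond; apply: eq_bigr => sg _.
rewrite (bigD1 sg) //= big1 => [|tau /negbTE tau_sg]; last first.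
  by rewrite Tprod_E [sg == tau]eq_sym tau_sg !mul0r mulr0.
rewrite addr0 Tprod_E eqxx mul1r Mker_E //.
by case: (compatible ends sg A); rewrite ?mul1r ?mul0r.
Qed.
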